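(* Let $G$ be a finite simple graph on $[d]$ and $<$ a monomial order on $R[G]$. Let $\mathcal{G}_1$ be the reduced Gröbner basis of $J_G$ with respect to $<$, and let $\mathcal{G}_2=\{x_Sx_T : S,T\in S(G),\ S\cap T\neq\emptyset\}$. Then $\mathcal{G}=(\mathcal{G}_1\setminus M_G)\cup\mathcal{G}_2$ is the reduced Gröbner basis of $K_G$ with respect to $<$.
   Context: A stable set of $G$ is a subset of $[d]$ with no edge of $G$ (including $\emptyset$ and singletons); $S(G)$ is the set of stable sets; $R[G]=\mathbb{K}[x_S : S\in S(G)]$ over a field $\mathbb{K}$, all variables of degree $1$. $J_G$ is the ideal generated by all $x_{S_1}x_{S_2}-x_{S_3}x_{S_4}$ with $S_i\in S(G)$, $S_1\cap S_2=S_3\cap S_4=\emptyset$, $S_1\cup S_2=S_3\cup S_4$ (the binomials ${\bf x}_f-{\bf x}_g$ for $2$-colorings $f,g$ of a common induced subgraph). $M_G=\langle x_Sx_T : S,T\in S(G),\ S\cap T\neq\emptyset\rangle$ and $K_G=J_G+M_G$. A Gröbner basis of $I$ w.r.t. $<$ is a finite subset of $I$ whose leading monomials generate the initial ideal ${\rm in}_<(I)$; it is reduced if all leading coefficients are $1$ and no monomial of any element lies in the ideal generated by the leading monomials of the other elements. *)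

From HB Require Import structures.
From mathcomp Require Import all_boot all_order all_algebra.
From mathcomp Require Export mpoly.
Set Implicit Arguments.
Unset Strict Implicit.
Unset Printing Implicit Defensive.
Import GRing.Theory.
Local Open Scope ring_scope.

Definition simple_graph (d : nat) (E : rel 'I_d) : Prop :=
  irreflexive E /\ ssrbool.symmetric E.

Definition stableb (d : nat) (E : rel 'I_d) (S : {set 'I_d}) : bool :=
  [forall x in S, forall y in S, ~~ E x y].

Definition stset (d : nat) (E : rel 'I_d) := {S : {set 'I_d} | stableb E S}.

Definition nvar (d : nat) (E : rel 'I_d) : nat := #|{: stset E}|.

(* The polynomial ring R[G] = K[x_S : S in S(G)], variables indexed through
   an enumeration of S(G). *)
Definition RG (K : fieldType) (d : nat) (E : rel 'I_d) := {mpoly K[nvar E]}.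

Definition xS (K : fieldType) (d : nat) (E : rel 'I_d) (S : stset E) : RG K E :=
  'X_(enum_rank S).
Arguments xS K {d E} S.

Definition ideal_gen (n : nat) (K : fieldType) (P : {mpoly K[n]} -> Prop)
  : {mpoly K[n]} -> Prop :=
  fun f => exists l : seq ({mpoly K[n]} * {mpoly K[n]}),
    (forall cg, cg \in l -> P cg.2) /\ f = \sum_(cg <- l) cg.1 * cg.2.

Definition ideal_sum (n : nat) (K : fieldType) (I J : {mpoly K[n]} -> Prop)
  : {mpoly K[n]} -> Prop :=
  fun f => exists g h, I g /\ J h /\ f = g + h.

Definition J_gens (K : fieldType) (d : nat) (E : rel 'I_d) : RG K E -> Prop :=
  fun f => exists S1 S2 S3 S4 : stset E,
    [/\ val S1 :&: val S2 = set0, val S3 :&: val S4 = set0,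
        val S1 :|: val S2 = val S3 :|: val S4 &
        f = xS K S1 * xS K S2 - xS K S3 * xS K S4].
Arguments J_gens K {d} E _.

Definition J_G (K : fieldType) (d : nat) (E : rel 'I_d) : RG K E -> Prop :=
  ideal_gen (J_gens K E).
Arguments J_G K {d} E _.

Definition M_gens (K : fieldType) (d : nat) (E : rel 'I_d) : RG K E -> Prop :=
  fun f => exists S T : stset E, val S :&: val T != set0 /\ f = xS K S * xS K T.
Arguments M_gens K {d} E _.

Definition M_G (K : fieldType) (d : nat) (E : rel 'I_d) : RG K E -> Prop :=
  ideal_gen (M_gens K E).
Arguments M_G K {d} E _.

Definition K_G (K : fieldType) (d : nat) (E : rel 'I_d) : RG K E -> Prop :=
  ideal_sum (J_G K E) (M_G K E).
Arguments K_G K {d} E _.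

Definition monomial_order (n : nat) (le : rel 'X_{1..n}) : Prop :=
  [/\ reflexive le, antisymmetric le, transitive le & total le] /\
  (forall m1 m2 m, le m1 m2 -> le (m1 + m)%MM (m2 + m)%MM) /\
  well_founded (fun a b => le a b && (a != b)).

(* Leading monomial: the le-maximum of the support (0 for the zero poly). *)
Definition lmon (n : nat) (K : fieldType) (le : rel 'X_{1..n}) (p : {mpoly K[n]})
  : 'X_{1..n} :=
  let s := msupp p in
  foldr (fun m acc => if le acc m then m else acc) (head 0%MM s) (behead s).

Definition lcoef (n : nat) (K : fieldType) (le : rel 'X_{1..n}) (p : {mpoly K[n]}) : K :=
  p@_(lmon le p).

Definition lead_ideal (n : nat) (K : fieldType) (le : rel 'X_{1..n})
  (P : {mpoly K[n]} -> Prop) : {mpoly K[n]} -> Prop :=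
  ideal_gen (fun u => exists f, P f /\ f != 0 /\ u = 'X_[lmon le f]).

Definition init_ideal (n : nat) (K : fieldType) (le : rel 'X_{1..n})
  (I : {mpoly K[n]} -> Prop) : {mpoly K[n]} -> Prop := lead_ideal le I.

Definition finite_set (n : nat) (K : fieldType) (B : {mpoly K[n]} -> Prop) : Prop :=
  exists s : seq {mpoly K[n]}, forall f, B f <-> f \in s.

Definition groebner_basis (n : nat) (K : fieldType) (le : rel 'X_{1..n})
  (I B : {mpoly K[n]} -> Prop) : Prop :=
  [/\ finite_set B, (forall g, B g -> I g) &
      (forall f, lead_ideal le B f <-> init_ideal le I f)].

Definition reduced_groebner_basis (n : nat) (K : fieldType) (le : rel 'X_{1..n})
  (I B : {mpoly K[n]} -> Prop) : Prop :=
  [/\ groebner_basis le I B,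
      (forall g, B g -> lcoef le g = 1) &
      (forall g, B g -> forall m, m \in msupp g ->
         ~ lead_ideal le (fun h => B h /\ h <> g) 'X_[m])].

From mathcomp Require Import all_boot all_order all_algebra.
From mathcomp Require Import mpoly.

(* Call a monomial x_S1 ... x_Sk disjoint when the stable sets S1, ..., Sk are
   pairwise disjoint.  The two terms of a binomial generator of J_G have the same
   vertex multiplicities, so the projection onto the span of disjoint monomials maps
   J_G into itself, while M_G consists exactly of the polynomials supported on
   non-disjoint monomials.  Hence the projection of K_G lies in J_G: a disjoint
   leading monomial of K_G is a leading monomial of J_G, and a non-disjoint one is a
   multiple of some x_S x_T with S and T meeting.  Reducedness of G_1, applied to g
   minus its projection and to the projection itself, shows that every g in G_1
   outside M_G is supported on disjoint monomials, which gives reducedness. *)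

Set Implicit Arguments.
Unset Strict Implicit.
Unset Printing Implicit Defensive.
Import GRing.Theory.
Local Open Scope ring_scope.

Section IdealGen.
Variables (n : nat) (K : fieldType).
Implicit Types (f g : {mpoly K[n]}) (P Q : {mpoly K[n]} -> Prop).

Lemma ideal_gen0 P : ideal_gen P 0.
Proof. by exists [::]; rewrite big_nil. Qed.

Lemma ideal_genD P f g : ideal_gen P f -> ideal_gen P g -> ideal_gen P (f + g).
Proof.
move=> [l1 [h1 ->]] [l2 [h2 ->]]; exists (l1 ++ l2); rewrite big_cat; split=> //.
by move=> cg; rewrite mem_cat => /orP[/h1|/h2].
Qed.

Lemma ideal_genMl P c f : ideal_gen P f -> ideal_gen P (c * f).
Proof.
move=> [l [h ->]]; exists [seq (c * cg.1, cg.2) | cg <- l]; split.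
  by move=> cg /mapP [x /h ? ->].
by rewrite big_map mulr_sumr; apply: eq_bigr => x _; rewrite mulrA.
Qed.

Lemma ideal_genB P f g : ideal_gen P f -> ideal_gen P g -> ideal_gen P (f - g).
Proof. by move=> hf hg; rewrite -mulN1r; apply/ideal_genD/ideal_genMl. Qed.

Lemma ideal_gen_base P f : P f -> ideal_gen P f.
Proof.
by move=> hf; exists [:: (1, f)]; rewrite big_seq1 mul1r; split=> // cg /[1!inE] /eqP->.
Qed.

Lemma ideal_gen_sum P (T : eqType) (s : seq T) (F : T -> {mpoly K[n]}) :
  (forall x, x \in s -> ideal_gen P (F x)) -> ideal_gen P (\sum_(x <- s) F x).
Proof.
elim: s => [|x s IH] H; first by rewrite big_nil; apply: ideal_gen0.
rewrite big_cons; apply: ideal_genD; first by apply: H; rewrite mem_head.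
by apply: IH => y hy; apply: H; rewrite inE hy orbT.
Qed.

Lemma ideal_gen_trans P Q f :
  (forall g, P g -> ideal_gen Q g) -> ideal_gen P f -> ideal_gen Q f.
Proof. by move=> PQ [l [hl ->]]; apply: ideal_gen_sum => cg /hl/PQ/ideal_genMl. Qed.

Lemma ideal_gen_supp (Qm : 'X_{1..n} -> Prop) P f :
  (forall m k, Qm m -> Qm (k + m)%MM) ->
  (forall g, P g -> forall m, m \in msupp g -> Qm m) ->
  ideal_gen P f -> forall m, m \in msupp f -> Qm m.
Proof.
move=> Qm_up QmP [l [hl ->]] m /msupp_sum_le /flattenP [_ /mapP [cg + ->]].
rewrite filter_predT => /hl Pcg /msuppM_le /allpairsP [[k1 k2] /= [_ k2_supp ->]].
exact/Qm_up/(QmP _ Pcg).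
Qed.

End IdealGen.

Section MonomialOrder.
Variables (n : nat) (K : fieldType) (le : rel 'X_{1..n}).
Hypothesis hle : monomial_order le.
Implicit Types (f g : {mpoly K[n]}) (P : {mpoly K[n]} -> Prop) (m u : 'X_{1..n}).

Lemma mo_refl : reflexive le. Proof. by case: hle => [[]]. Qed.
Lemma mo_anti : antisymmetric le. Proof. by case: hle => [[]]. Qed.
Lemma mo_trans : transitive le. Proof. by case: hle => [[]]. Qed.
Lemma mo_total : total le. Proof. by case: hle => [[]]. Qed.
Lemma mo_addr m1 m2 m : le m1 m2 -> le (m1 + m)%MM (m2 + m)%MM.
Proof. by case: hle => _ [+ _]; apply. Qed.

(* If [m] were below [0], its multiples would form an infinite descending chain. *)
Lemma mo_ge0 m : le 0%MM m.
Proof.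
have [//|/negbTE lt_m0] := boolP (le 0%MM m); exfalso.
have le_m0 : le m 0%MM by have := mo_total m 0%MM; rewrite lt_m0 orbF.
have m_neq0 : m != 0%MM by apply: contraFneq lt_m0 => ->; rewrite mo_refl.
pose a j := iter j (fun x => (x + m)%MM) m.
have a_desc j : le (a j.+1) (a j) && (a j.+1 != a j).
  rewrite /= -/(a j); apply/andP; split.
    by have := mo_addr (a j) le_m0; rewrite add0m addmC.
  by rewrite -[X in _ != X]addm0 eqm_add2l.
suff: forall x, Acc (fun a b => le a b && (a != b)) x -> forall j, x <> a j.
  by case: hle => _ [_ /(_ (a 0))] acc /(_ _ acc 0); apply.
move=> x; elim => {}x _ IH j x_aj; apply: (IH (a j.+1)) (erefl _).
by rewrite x_aj a_desc.
Qed.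

Lemma mo_lem u m : (u <= m)%MM -> le u m.
Proof. by move=> /submK <-; rewrite -{1}[u]add0m; apply/mo_addr/mo_ge0. Qed.

Let maxle m acc := if le acc m then m else acc.

Lemma foldr_maxle_spec x t :
  foldr maxle x t \in x :: t /\ forall y, y \in x :: t -> le y (foldr maxle x t).
Proof.
elim: t => [|y t [IH1 IH2]].
  by rewrite mem_head; split=> // y /[1!inE] /eqP ->; apply: mo_refl.
rewrite /= {1 3}/maxle; set r := foldr _ x t in IH1 IH2 *.
have r_ge z : z \in x :: t -> le z r by apply: IH2.
have x_xt : x \in x :: t by rewrite mem_head.
case: ifP => le_ry; split.
- by rewrite !inE eqxx orbT.
- move=> z; rewrite !inE => /or3P [/eqP ->|/eqP ->|z_t]; last first.
  + by apply: mo_trans le_ry; apply: r_ge; rewrite inE z_t orbT.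
  + exact: mo_refl.
  + exact: mo_trans (r_ge _ x_xt) le_ry.
- by move: IH1; rewrite !inE => /orP [] ->; rewrite ?orbT.
- move=> z; rewrite !inE => /or3P [/eqP ->|/eqP ->|z_t].
  + exact: r_ge.
  + by have := mo_total r y; rewrite le_ry.
  + by apply: r_ge; rewrite inE z_t orbT.
Qed.

Lemma lmon_supp f : f != 0 -> lmon le f \in msupp f.
Proof.
rewrite -msupp_eq0 /lmon; case: (msupp f) => [|x t] //= _.
by case: (foldr_maxle_spec x t).
Qed.

Lemma lmon_max f m : m \in msupp f -> le m (lmon le f).
Proof.
rewrite /lmon; case: (msupp f) => [|x t] //= m_xt.
by have [_] := foldr_maxle_spec x t; apply.
Qed.

Lemma lmon_eq f u : u \in msupp f -> {in msupp f, forall m, le m u} -> lmon le f = u.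
Proof.
move=> u_f u_max; have f_neq0 : f != 0 by rewrite -msupp_eq0; case: (msupp f) u_f.
by apply: mo_anti; rewrite lmon_max // u_max // lmon_supp.
Qed.

Lemma lmonX m : lmon le ('X_[m] : {mpoly K[n]}) = m.
Proof. by rewrite /lmon msuppX. Qed.

Lemma lead_idealXP P m :
  lead_ideal le P 'X_[m] <-> exists f, [/\ P f, f != 0 & (lmon le f <= m)%MM].
Proof.
split=> [lead_m|[f [Pf f_neq0 /submK <-]]]; last first.
  by rewrite mpolyXD; apply/ideal_genMl/ideal_gen_base; exists f.
pose Qm m := exists f, [/\ P f, f != 0 & (lmon le f <= m)%MM].
apply: (@ideal_gen_supp _ _ Qm _ _ _ _ lead_m); last by rewrite msuppX mem_head.
  move=> m' k [f [Pf f_neq0 f_m']]; exists f; split=> //.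
  exact: lepm_trans f_m' (lem_addl _ _).
move=> _ [f [Pf [f_neq0 ->]]] m' /[!msuppX] /[1!inE] /eqP ->.
by exists f; rewrite lepm_refl.
Qed.

Lemma reduced_gb_eq0 I G g h : reduced_groebner_basis le I G -> G g -> I h ->
  {subset msupp h <= msupp g} -> lmon le g \notin msupp h -> h = 0.
Proof.
move=> [[_ _ lead_init] _ G_red] Gg Ih h_g lg_h; apply/eqP/negPn/negP => h_neq0.
have u_h := lmon_supp h_neq0; set u := lmon le h in u_h.
have /lead_init/lead_idealXP [g' [Gg' g'_neq0 g'_u]] : init_ideal le I 'X_[u].
  by apply: ideal_gen_base; exists h.
have [eq_g'g|neq_g'g] := eqVneq g' g.
  suff eq_ug : u = lmon le g by rewrite -eq_ug u_h in lg_h.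
  by apply: mo_anti; rewrite lmon_max ?h_g //= -eq_g'g mo_lem.
apply: (G_red g Gg u (h_g _ u_h)); apply/lead_idealXP.
by exists g'; split=> //; split=> //; apply/eqP.
Qed.

End MonomialOrder.

Lemma lem_mdeg_eq n (u m : 'X_{1..n}) : (u <= m)%MM -> (mdeg m <= mdeg u)%N -> u = m.
Proof.
move=> /submK <-; rewrite mdegD -{2}[mdeg u]add0n leq_add2r leqn0 mdeg_eq0.
by move=> /eqP ->; rewrite add0m.
Qed.

Section StableSetMonomials.
Variables (K : fieldType) (d : nat) (E : rel 'I_d).
Local Notation n := (nvar E).
Implicit Types (f g : RG K E) (m u a c : 'X_{1..n}) (S T : stset E).

Definition vset (i : 'I_n) : {set 'I_d} := val (enum_val i : stset E).

Definition vmult m (v : 'I_d) : nat := (\sum_(i < n) m i * (v \in vset i))%N.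

(* [m] is [x_S1 ... x_Sk] with the stable sets [S1, ..., Sk] pairwise disjoint. *)
Definition disjoint_mon m : bool := [forall v, vmult m v <= 1]%N.

Lemma vsetK S : vset (enum_rank S) = val S.
Proof. by rewrite /vset enum_rankK. Qed.

Lemma vmultD m1 m2 v : vmult (m1 + m2)%MM v = (vmult m1 v + vmult m2 v)%N.
Proof. by rewrite /vmult -big_split; apply: eq_bigr => i _; rewrite mnmDE mulnDl. Qed.

Lemma vmultU i v : vmult U_(i)%MM v = (v \in vset i).
Proof.
rewrite /vmult (bigD1 i) //= mnm1E eqxx mul1n big1 ?addn0 // => j /negbTE.
by rewrite mnm1E eq_sym => ->.
Qed.

Lemma vmult_gt0 m v : (0 < vmult m v)%N -> exists2 i, (0 < m i)%N & v \in vset i.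
Proof.
rewrite lt0n sum_nat_eq0 => /forallPn [i]; rewrite /= muln_eq0 negb_or -lt0n.
by case/andP=> m_i; rewrite eqb0 negbK; exists i.
Qed.

Lemma disjoint_mon_lem u m : (u <= m)%MM -> disjoint_mon m -> disjoint_mon u.
Proof.
move=> /submK <- /forallP m_disj; apply/forallP => v.
by apply: leq_trans (m_disj v); rewrite vmultD leq_addl.
Qed.

Lemma nondisjoint_monP m : ~~ disjoint_mon m ->
  exists S T, val S :&: val T != set0 /\ (U_(enum_rank S) + U_(enum_rank T) <= m)%MM.
Proof.
move=> /forallPn [v]; rewrite -ltnNge => v_gt1.
have [i m_i v_i] := vmult_gt0 (ltnW v_gt1).
have Ui_m : (U_(i) <= m)%MM.
  by apply/mnm_lepP => j; rewrite mnm1E; case: eqP => [<-|].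
have [j m'_j v_j] : exists2 j, (0 < (m - U_(i))%MM j)%N & v \in vset j.
  by apply: vmult_gt0; move: v_gt1; rewrite -{1}(submK Ui_m) vmultD vmultU v_i addn1.
exists (enum_val i), (enum_val j); rewrite !enum_valK; split.
  by apply/set0Pn; exists v; rewrite inE v_i v_j.
rewrite -[X in (_ <= X)%MM](submK Ui_m) [X in (_ <= X)%MM]addmC.
by apply/mnm_lepP => k; rewrite !mnmDE leq_add2l mnm1E; case: eqP => [<-|].
Qed.

Lemma xS_mul S T : xS K S * xS K T = 'X_[U_(enum_rank S) + U_(enum_rank T)].
Proof. by rewrite /xS mpolyXD. Qed.

Lemma mdeg_pair S T : mdeg (U_(enum_rank S) + U_(enum_rank T))%MM = 2%N.
Proof. by rewrite mdegD !mdeg1. Qed.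

Lemma vmult_pair S T v : val S :&: val T = set0 ->
  vmult (U_(enum_rank S) + U_(enum_rank T))%MM v = (v \in val S :|: val T).
Proof.
move=> ST0; rewrite vmultD !vmultU !vsetK in_setU.
have [v_S|] := boolP (v \in val S); have [v_T|] //= := boolP (v \in val T).
by have := in_setI v (val S) (val T); rewrite ST0 inE v_S v_T.
Qed.

Lemma M_gensE f : M_gens K E f ->
  exists a, [/\ f = 'X_[a], ~~ disjoint_mon a & mdeg a = 2%N].
Proof.
move=> [S [T [/set0Pn [v] /[!inE] /andP [v_S v_T] ->]]]; rewrite xS_mul.
exists (U_(enum_rank S) + U_(enum_rank T))%MM; split; rewrite ?mdeg_pair //.
by apply/forallPn; exists v; rewrite vmultD !vmultU !vsetK v_S v_T.
Qed.

Lemma J_gensE f : J_gens K E f -> exists a c,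
  [/\ f = 'X_[a] - 'X_[c], vmult a =1 vmult c, mdeg a = 2%N & mdeg c = 2%N].
Proof.
move=> [S1 [S2 [S3 [S4 [S12 S34 eqU ->]]]]]; rewrite !xS_mul.
do 2 eexists; split; rewrite ?mdeg_pair // => v.
by rewrite !vmult_pair // eqU.
Qed.

Definition disjoint_part f : RG K E :=
  \sum_(m <- msupp f | disjoint_mon m) f@_m *: 'X_[m].

Lemma disjoint_partE f m : (disjoint_part f)@_m = if disjoint_mon m then f@_m else 0.
Proof.
rewrite /disjoint_part raddf_sum /= big_mkcond /=.
under eq_bigr => k _ do rewrite mcoeffZ mcoeffX.
have [m_f|m_f] := boolP (m \in msupp f).
  rewrite (bigD1_seq m) ?msupp_uniq //= eqxx mulr1 big1 ?addr0 // => k /negbTE k_m.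
  by rewrite k_m mulr0 if_same.
rewrite big1_seq ?(memN_msupp_eq0 m_f) ?if_same // => k /andP [_ k_f].
have -> : (k == m) = false by apply: contraNF m_f => /eqP <-.
by rewrite mulr0 if_same.
Qed.

Lemma mem_msupp_disjoint_part f m :
  (m \in msupp (disjoint_part f)) = disjoint_mon m && (m \in msupp f).
Proof. by rewrite !mcoeff_msupp disjoint_partE; case: ifP; rewrite ?eqxx. Qed.

Lemma mem_msupp_sub_disjoint_part f m :
  (m \in msupp (f - disjoint_part f)) = ~~ disjoint_mon m && (m \in msupp f).
Proof.
by rewrite !mcoeff_msupp mcoeffB disjoint_partE; case: ifP; rewrite ?subrr ?eqxx ?subr0.
Qed.

Lemma disjoint_part0 : disjoint_part 0 = 0.
Proof. by apply/mpolyP => m; rewrite disjoint_partE mcoeff0 if_same. Qed.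

Lemma disjoint_partD f g : disjoint_part (f + g) = disjoint_part f + disjoint_part g.
Proof.
by apply/mpolyP => m; rewrite mcoeffD !disjoint_partE mcoeffD; case: ifP; rewrite ?addr0.
Qed.

Lemma disjoint_partZ x f : disjoint_part (x *: f) = x *: disjoint_part f.
Proof.
by apply/mpolyP => m; rewrite mcoeffZ !disjoint_partE mcoeffZ; case: ifP; rewrite ?mulr0.
Qed.

Lemma disjoint_part_sum (I : Type) (s : seq I) (F : I -> RG K E) :
  disjoint_part (\sum_(i <- s) F i) = \sum_(i <- s) disjoint_part (F i).
Proof. exact: (big_morph _ disjoint_partD disjoint_part0). Qed.

(* Both terms of a binomial of [J_G] have the same vertex multiplicities, so they
   are disjoint or not together. *)
Lemma disjoint_part_mulX_binom k a c : vmult a =1 vmult c ->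
  disjoint_part ('X_[k] * ('X_[a] - 'X_[c])) =
  if disjoint_mon (k + a) then 'X_[k] * ('X_[a] - 'X_[c]) else 0.
Proof.
move=> eq_ac; have eq_disj : disjoint_mon (k + a) = disjoint_mon (k + c).
  by apply: eq_forallb => v; rewrite !vmultD eq_ac.
rewrite mulrBr -!mpolyXD; apply/mpolyP => m; rewrite disjoint_partE.
have [ka_disj|ka_ndisj] := boolP (disjoint_mon (k + a)).
  have [//|m_ndisj] := boolP (disjoint_mon m).
  rewrite mcoeffB !mcoeffX.
  have /negbTE-> : (k + a)%MM != m by apply: contraNneq m_ndisj => <-.
  have /negbTE-> : (k + c)%MM != m by apply: contraNneq m_ndisj => <-; rewrite -eq_disj.
  by rewrite subrr.
have [m_disj|_] := boolP (disjoint_mon m); last by rewrite mcoeff0.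
rewrite mcoeffB !mcoeffX mcoeff0.
have /negbTE-> : (k + a)%MM != m by apply: contraNneq ka_ndisj => ->.
have /negbTE-> : (k + c)%MM != m by apply: contraNneq ka_ndisj => kc_m; rewrite eq_disj kc_m.
by rewrite subrr.
Qed.

Lemma J_G_disjoint_part f : J_G K E f -> J_G K E (disjoint_part f).
Proof.
move=> [l [hl ->]]; rewrite disjoint_part_sum; apply: ideal_gen_sum => cg /hl J_cg.
have [a [c [eq_cg eq_ac _ _]]] := J_gensE J_cg.
rewrite (mpolyE cg.1) mulr_suml disjoint_part_sum; apply: ideal_gen_sum => k _.
rewrite -scalerAl disjoint_partZ eq_cg disjoint_part_mulX_binom // -eq_cg.
case: ifP => _; last by rewrite scaler0; apply: ideal_gen0.
by rewrite scalerAl; apply/ideal_genMl/ideal_gen_base.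
Qed.

Lemma J_G_mdeg f : J_G K E f -> {in msupp f, forall m, 2 <= mdeg m}%N.
Proof.
move=> J_f m; apply: (@ideal_gen_supp _ _ (fun m => 2 <= mdeg m)%N _ _ _ _ J_f).
  by move=> m' k; rewrite mdegD => /leq_trans; apply; rewrite leq_addl.
move=> g /J_gensE [a [c [-> _ deg_a deg_c]]] m' /msuppB_le.
by rewrite mem_cat !msuppX !inE => /orP [] /eqP ->; rewrite ?deg_a ?deg_c.
Qed.

Lemma M_GP f : M_G K E f <-> {in msupp f, forall m, ~~ disjoint_mon m}.
Proof.
split=> [M_f m|f_ndisj].
  apply: (@ideal_gen_supp _ _ (fun m => ~~ disjoint_mon m) _ _ _ _ M_f).
    by move=> m' k; apply: contra; apply/disjoint_mon_lem/lem_addl.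
  by move=> g /M_gensE [a [-> a_ndisj _]] m' /[!msuppX] /[1!inE] /eqP ->.
rewrite (mpolyE f); apply: ideal_gen_sum => m /f_ndisj /nondisjoint_monP [S [T [ST pair_m]]].
rewrite -mul_mpolyC -(submK pair_m) mpolyXD -xS_mul mulrA; apply/ideal_genMl/ideal_gen_base.
by exists S, T.
Qed.

Lemma disjoint_part_M f : M_G K E f -> disjoint_part f = 0.
Proof.
move=> /M_GP f_ndisj; apply/mpolyP => m; rewrite disjoint_partE mcoeff0.
by case: ifP => // m_disj; apply: memN_msupp_eq0; apply: contraTN m_disj => /f_ndisj.
Qed.

Lemma J_G_sub_K_G f : J_G K E f -> K_G K E f.
Proof. by move=> J_f; exists f, 0; split; [|split; [apply: ideal_gen0|rewrite addr0]]. Qed.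

Lemma M_G_sub_K_G f : M_G K E f -> K_G K E f.
Proof. by move=> M_f; exists 0, f; split; [apply: ideal_gen0|rewrite add0r]. Qed.

Lemma K_G_disjoint_part f : K_G K E f -> J_G K E (disjoint_part f).
Proof.
move=> [g [h [J_g [M_h ->]]]].
by rewrite disjoint_partD (disjoint_part_M M_h) addr0; apply: J_G_disjoint_part.
Qed.

End StableSetMonomials.

Section GroebnerBasisOfK_G.
Variables (K : fieldType) (d : nat) (E : rel 'I_d) (le : rel 'X_{1..nvar E}).
Hypothesis hle : monomial_order le.
Variable G1 : RG K E -> Prop.
Hypothesis G1_red : reduced_groebner_basis le (J_G K E) G1.
Implicit Types (f g h : RG K E).

Definition KG_basis f : Prop := (G1 f /\ ~ M_G K E f) \/ M_gens K E f.

Lemma G1_sub_J_G g : G1 g -> J_G K E g.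
Proof. by case: G1_red => [[_ G1_J _] _ _]; apply: G1_J. Qed.

(* [g - disjoint_part g] and [disjoint_part g] lie in [J_G] and are supported in
   [msupp g]; by reducedness one of them vanishes, depending on whether the leading
   monomial of [g] is disjoint. *)
Lemma G1_disjoint_supp g : G1 g -> ~ M_G K E g -> {in msupp g, forall m, disjoint_mon m}.
Proof.
move=> G1g g_nM m m_g; have J_g := G1_sub_J_G G1g.
have [lg_disj|lg_ndisj] := boolP (disjoint_mon (lmon le g)).
  apply: contraT => m_ndisj.
  suff g_disj : g - disjoint_part g = 0.
    have := mem_msupp_sub_disjoint_part g m.
    by rewrite g_disj m_ndisj m_g mcoeff_msupp mcoeff0 eqxx.
  apply: (reduced_gb_eq0 hle G1_red G1g (ideal_genB J_g (J_G_disjoint_part J_g))).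
    by move=> m'; rewrite mem_msupp_sub_disjoint_part => /andP [].
  by rewrite mem_msupp_sub_disjoint_part lg_disj.
have pg0 : disjoint_part g = 0.
  apply: (reduced_gb_eq0 hle G1_red G1g (J_G_disjoint_part J_g)).
    by move=> m'; rewrite mem_msupp_disjoint_part => /andP [].
  by rewrite mem_msupp_disjoint_part (negbTE lg_ndisj).
exfalso; apply/g_nM/M_GP => m' m'_g; apply/negP => m'_disj.
have := mem_msupp_disjoint_part g m'.
by rewrite pg0 m'_disj m'_g mcoeff_msupp mcoeff0 eqxx.
Qed.

Lemma KG_basis_finite : finite_set KG_basis.
Proof.
have [[[s1 s1P] _ _] _ _] := G1_red.
pose nondisj g := all (fun m => ~~ disjoint_mon m) (msupp g).
have M_GE g : M_G K E g <-> nondisj g by rewrite M_GP; split=> /allP.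
pose pairs := [seq p <- enum {: stset E * stset E} | val p.1 :&: val p.2 != set0].
exists ([seq g <- s1 | ~~ nondisj g] ++ [seq xS K p.1 * xS K p.2 | p <- pairs]).
move=> f; rewrite mem_cat mem_filter; split.
  case=> [[/s1P G1f /M_GE/negP f_nM]|[S [T [ST ->]]]]; first by rewrite f_nM G1f.
  by apply/orP; right; apply/mapP; exists (S, T); rewrite // mem_filter mem_enum ST.
case/orP=> [/andP [/negP f_nM /s1P G1f]|/mapP [[S T]]]; first by left; split=> // /M_GE.
by rewrite mem_filter => /andP [ST _] ->; right; exists S, T.
Qed.

Lemma KG_basis_sub_K_G g : KG_basis g -> K_G K E g.
Proof.
case=> [[/G1_sub_J_G/J_G_sub_K_G //]|M_g].
exact/M_G_sub_K_G/ideal_gen_base.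
Qed.

Lemma lead_ideal_KG_basis_lmon f :
  K_G K E f -> f != 0 -> lead_ideal le KG_basis 'X_[lmon le f].
Proof.
move=> K_f f_neq0; set m := lmon le f.
have [m_disj|m_ndisj] := boolP (disjoint_mon m); last first.
  have [S [T [ST pair_m]]] := nondisjoint_monP m_ndisj.
  apply/lead_idealXP; exists (xS K S * xS K T); rewrite xS_mul lmonX.
  by split=> //; [right; exists S, T; rewrite xS_mul | rewrite -msupp_eq0 msuppX].
have m_pf : m \in msupp (disjoint_part f).
  by rewrite mem_msupp_disjoint_part m_disj lmon_supp.
have lmon_pf : lmon le (disjoint_part f) = m.
  apply: (lmon_eq hle m_pf) => m' /[!mem_msupp_disjoint_part] /andP [_].
  exact: lmon_max.
have pf_neq0 : disjoint_part f != 0 by rewrite -msupp_eq0; case: (msupp _) m_pf.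
have [[_ _ lead_init] _ _] := G1_red.
have /lead_init/lead_idealXP [g [G1g g_neq0 g_m]] : init_ideal le (J_G K E) 'X_[m].
  apply: ideal_gen_base; exists (disjoint_part f).
  by rewrite lmon_pf; split=> //; apply: K_G_disjoint_part.
apply/lead_idealXP; exists g; split=> //; left; split=> // /M_GP g_ndisj.
by have := g_ndisj _ (lmon_supp hle g_neq0); rewrite (disjoint_mon_lem g_m m_disj).
Qed.

Lemma lead_ideal_KG_basis f : lead_ideal le KG_basis f <-> init_ideal le (K_G K E) f.
Proof.
split; apply: ideal_gen_trans => _ [g [Bg [g_neq0 ->]]].
  by apply: ideal_gen_base; exists g; split=> //; apply: KG_basis_sub_K_G.
exact: lead_ideal_KG_basis_lmon.
Qed.

Lemma lcoef_KG_basis g : KG_basis g -> lcoef le g = 1.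
Proof.
have [[_ _ _] G1_lcoef _] := G1_red.
case=> [[/G1_lcoef //]|/M_gensE [a [-> _ _]]].
by rewrite /lcoef lmonX mcoeffX eqxx.
Qed.

Lemma KG_basis_reduced g : KG_basis g -> forall m, m \in msupp g ->
  ~ lead_ideal le (fun h => KG_basis h /\ h <> g) 'X_[m].
Proof.
have [_ _ G1_reduced] := G1_red.
move=> Bg m m_g /lead_idealXP [h [[Bh h_neq_g] h_neq0 h_m]].
case: Bg => [[G1g g_nM]|/M_gensE [a [eq_g a_ndisj deg_a]]].
  have m_disj := G1_disjoint_supp G1g g_nM m_g.
  case: Bh => [[G1h h_nM]|/M_gensE [b [eq_h b_ndisj _]]].
    by apply: (G1_reduced g G1g m m_g); apply/lead_idealXP; exists h.
  by move: h_m; rewrite eq_h lmonX => /disjoint_mon_lem/(_ m_disj); apply/negP.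
move: m_g h_m; rewrite eq_g msuppX inE => /eqP -> {m}.
case: Bh => [[G1h h_nM]|/M_gensE [b [eq_h _ deg_b]]] h_a.
  have lh_h := lmon_supp hle h_neq0.
  have lh_deg := J_G_mdeg (G1_sub_J_G G1h) lh_h.
  by move: a_ndisj; rewrite -(lem_mdeg_eq h_a) ?deg_a // (G1_disjoint_supp G1h h_nM lh_h).
apply: h_neq_g; move: h_a; rewrite eq_h eq_g lmonX => /lem_mdeg_eq eq_ba.
by rewrite eq_ba // deg_a deg_b.
Qed.

End GroebnerBasisOfK_G.

Unset Implicit Arguments.
Set Strict Implicit.

Theorem proposition6p4 (K : fieldType) (d : nat) (E : rel 'I_d)
  (hE : simple_graph E) (le : rel 'X_{1..nvar E}) (hle : monomial_order le)
  (G1 : RG K E -> Prop) (hG1 : reduced_groebner_basis le (J_G K E) G1) :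
  reduced_groebner_basis le (K_G K E)
    (fun f => (G1 f /\ ~ M_G K E f) \/ M_gens K E f).
Proof.
(* The argument never uses that [E] is simple. *)
split; [split | |].
- exact (KG_basis_finite hG1).
- exact (KG_basis_sub_K_G hG1).
- exact (lead_ideal_KG_basis hle hG1).
- exact (lcoef_KG_basis hG1).
- exact (KG_basis_reduced hle hG1).
Qed.
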